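(* Let $\sigma$ be a term ordering on $\mathbb{T}^n$, let $I$ be a non-zero ideal in $\mathbb{Q}[x_1,\dots,x_n]$, and let $G_\sigma$ be its reduced $\sigma$-Gröbner basis. Let $J=\langle\operatorname{prim}(G_\sigma)\rangle\subseteq\mathbb{Z}[x_1,\dots,x_n]$. Then $\operatorname{rad}(\operatorname{den}(G_\sigma))=\operatorname{rad}(\operatorname{lcm}_\sigma(J))$.
   Context: $\mathbb{T}^n$ is the monoid of power-products in $x_1,\dots,x_n$; $\mathrm{LT}_\sigma$, $\mathrm{LC}_\sigma$, $\mathrm{LM}_\sigma$ denote leading term, leading coefficient and leading monomial. For $f\in\mathbb{Q}[x_1,\dots,x_n]$, $\operatorname{den}(f)$ is the positive lcm of the denominators of its coefficients; $\operatorname{den}(F)$ is the lcm of $\operatorname{den}(f)$, $f\in F$. For non-zero $f$, with $c$ the integer content of $f\cdot\operatorname{den}(f)$, $\operatorname{prim}(f)=c^{-1}f\cdot\operatorname{den}(f)$, and $\operatorname{prim}(F)=\{\operatorname{prim}(f):f\in F\}$. For a positive integer $N$, $\operatorname{rad}(N)$ is the product of the distinct primes dividing $N$. Non-zero $g_1,\dots,g_s\in\mathbb{Z}[x_1,\dots,x_n]$ form a strong $\sigma$-Gröbner basis of $\langle g_1,\dots,g_s\rangle$ if for every non-zero $f$ in this ideal some $\mathrm{LM}_\sigma(g_i)$ divides $\mathrm{LM}_\sigma(f)$; it is minimal if moreover $\mathrm{LM}_\sigma(g_i)\nmid\mathrm{LM}_\sigma(g_j)$ for $i\ne j$. Every non-zero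 ideal of $\mathbb{Z}[x_1,\dots,x_n]$ has a minimal strong $\sigma$-Gröbner basis, and all of them have the same set of leading coefficients. For an ideal $J$ of $\mathbb{Z}[x_1,\dots,x_n]$, $\operatorname{lcm}_\sigma(J)$ is the least common multiple of the leading coefficients of the elements of a minimal strong $\sigma$-Gröbner basis of $J$. *)

From HB Require Import structures.
From mathcomp Require Import all_boot all_order all_algebra.
From mathcomp Require Import mpoly.
From Stdlib Require Import ClassicalEpsilon.

Set Implicit Arguments.
Unset Strict Implicit.
Unset Printing Implicit Defensive.

Import Order.TTheory GRing.Theory Num.Theory.
Local Open Scope ring_scope.

Record term_order (n : nat) := TermOrder {
  tle : rel 'X_{1..n};
  tle_refl : forall m, tle m m;
  tle_anti : forall m1 m2, tle m1 m2 -> tle m2 m1 -> m1 = m2;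
  tle_trans : forall m1 m2 m3, tle m1 m2 -> tle m2 m3 -> tle m1 m3;
  tle_total : forall m1 m2, tle m1 m2 || tle m2 m1;
  tle_mul : forall m1 m2 m, tle m1 m2 -> tle (m1 + m)%MM (m2 + m)%MM;
  tle_one : forall m, tle 0%MM m
}.

Section Leading.
Variables (n : nat) (R : nzRingType) (sigma : term_order n).

Definition LT (f : {mpoly R[n]}) : 'X_{1..n} :=
  foldr (fun m acc => if tle sigma acc m then m else acc) 0%MM (msupp f).

Definition LC (f : {mpoly R[n]}) : R := f@_(LT f).
End Leading.

Definition in_ideal (n : nat) (R : comNzRingType) (G : seq {mpoly R[n]})
    (f : {mpoly R[n]}) : Prop :=
  exists c : seq {mpoly R[n]},
    f = \sum_(i < size G) c`_i * G`_i.

Definition is_ideal (n : nat) (R : comNzRingType) (I : {mpoly R[n]} -> Prop) :=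
  [/\ I 0,
      forall f g, I f -> I g -> I (f + g)
    & forall a f, I f -> I (a * f)].

Definition reduced_groebner (n : nat) (sigma : term_order n)
    (I : {mpoly rat[n]} -> Prop) (G : seq {mpoly rat[n]}) : Prop :=
  [/\ uniq G /\ (forall g, g \in G -> g != 0),
      forall f, I f <-> in_ideal G f,
      forall f, I f -> f != 0 -> (exists g, g \in G /\ (LT sigma g <= LT sigma f)%MM),
      forall g, g \in G -> LC sigma g = 1
    & forall g h, g \in G -> h \in G -> g != h ->
        forall m, m \in msupp h -> ~~ (LT sigma g <= m)%MM].

Definition den (n : nat) (f : {mpoly rat[n]}) : nat :=
  \big[lcmn/1%N]_(m <- msupp f) `|denq f@_m|%N.

Definition denF (n : nat) (F : seq {mpoly rat[n]}) : nat :=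
  \big[lcmn/1%N]_(f <- F) den f.

Definition icontent (n : nat) (f : {mpoly rat[n]}) : nat :=
  \big[gcdn/0%N]_(m <- msupp f) `|numq (f@_m * (den f)%:~R)|%N.

(* prim(f) = c^-1 * den(f) * f, as a polynomial with integer coefficients *)
Definition prim (n : nat) (f : {mpoly rat[n]}) : {mpoly int[n]} :=
  \sum_(m <- msupp f)
     (numq (f@_m * (den f)%:~R / (icontent f)%:~R)) *: 'X_[m].

Definition radn (N : nat) : nat := \prod_(p <- primes N) p.

Definition lm_dvd (n : nat) (sigma : term_order n) (g f : {mpoly int[n]}) : bool :=
  (LC sigma g %| LC sigma f)%Z && (LT sigma g <= LT sigma f)%MM.

Definition strong_groebner (n : nat) (sigma : term_order n)
    (J : {mpoly int[n]} -> Prop) (H : seq {mpoly int[n]}) : Prop :=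
  [/\ forall h, h \in H -> h != 0,
      forall f, J f <-> in_ideal H f
    & forall f, J f -> f != 0 -> (exists h, h \in H /\ lm_dvd sigma h f)].

Definition minimal_strong_groebner (n : nat) (sigma : term_order n)
    (J : {mpoly int[n]} -> Prop) (H : seq {mpoly int[n]}) : Prop :=
  strong_groebner sigma J H /\
  forall i j, (i < size H)%N -> (j < size H)%N -> i != j ->
    ~~ lm_dvd sigma H`_i H`_j.

(* lcm_sigma(J): lcm of the leading coefficients of a (chosen) minimal strong
   sigma-Groebner basis of J; well defined since all such bases share the same
   set of leading coefficients. *)
Definition lcm_sigma (n : nat) (sigma : term_order n)
    (J : {mpoly int[n]} -> Prop) : nat :=
  let H := epsilon (inhabits [::]) (minimal_strong_groebner sigma J) in
  \big[lcmn/1%N]_(h <- H) `|LC sigma h|%N.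

(* Let J = <prim(G)>, let H be a minimal strong Groebner basis of J, and fix a prime p.

   If p divides LC(h) for some h in H, pick g in G with LT(g) | LT(h).  A monomial
   multiple P of prim(g) lies in J and has leading term LT(h), so minimality of H gives
   LC(h) | LC(P) = LC(prim g), and LC(prim g) divides den(g) because g is monic.

   If p divides no LC(h), then every monomial of LT(I) is the leading term of an element
   of J whose leading coefficient is prime to p.  Start from such an element with leading
   term LT(g) and cancel its other monomials lying in LT(I), largest first: this yields
   F in J with LC(F) prime to p such that F / LC(F) has only standard monomials besides
   LT(g).  By uniqueness in the reduced basis F / LC(F) = g, so den(g) divides LC(F).

   H exists because the least absolute leading coefficient d(m) of an element of J with
   leading term m can only decrease, for divisibility, when m grows for divisibility;
   by Dickson's lemma d jumps at finitely many monomials, and elements realising d at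
   these jumps form a minimal strong basis. *)

From HB Require Import structures.
From mathcomp Require Import all_boot all_order all_algebra.
From mathcomp Require Import mpoly.
From Stdlib Require Import ClassicalEpsilon Classical.
Import GRing.Theory Num.Theory.
Set Implicit Arguments.
Unset Strict Implicit.
Unset Printing Implicit Defensive.

Definition classic_bool (P : Prop) : bool :=
  if excluded_middle_informative P then true else false.

Lemma classic_boolP (P : Prop) : reflect P (classic_bool P).
Proof. by rewrite /classic_bool; case: excluded_middle_informative => h; constructor. Qed.

Lemma ex_least_nat (P : nat -> Prop) :
  (exists k, P k) -> exists k, P k /\ forall j, P j -> k <= j.
Proof.
case=> k Pk; have ex : exists k, classic_bool (P k) by exists k; apply/classic_boolP.
case: (ex_minnP ex) => m /classic_boolP Pm m_min.
by exists m; split=> // j /classic_boolP; apply: m_min.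
Qed.

Section TermOrder.
Variables (n : nat) (s : term_order n).
Local Notation tl := (tle s).

Definition tmax (l : seq 'X_{1..n}) : 'X_{1..n} :=
  foldr (fun m acc => if tl acc m then m else acc) 0%MM l.

Lemma tle_tmax l x : x \in l -> tl x (tmax l).
Proof.
elim: l => [//|a l IH]; rewrite inE /= => /orP [/eqP ->|xl].
  case: ifP => h; first exact: tle_refl.
  by case/orP: (tle_total s a (tmax l)) => //; rewrite h.
by have := IH xl; case: ifP => // h1 h2; apply: tle_trans h2 h1.
Qed.

Lemma tmax_in l : l != [::] -> tmax l \in l.
Proof.
elim: l => [//|a l IH] _ /=; case: ifP => h; first by rewrite inE eqxx.
case: l IH h => [|b l] IH h; first by rewrite /= tle_one in h.
by rewrite inE IH ?orbT.
Qed.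

Lemma lepm_tle m1 m2 : (m1 <= m2)%MM -> tl m1 m2.
Proof.
move=> h; rewrite -(submK h); have := tle_mul m1 (tle_one s (m2 - m1)%MM).
by rewrite add0m.
Qed.

Lemma tle_add2r m1 m2 m : tl (m1 + m)%MM (m2 + m)%MM = tl m1 m2.
Proof.
apply/idP/idP; last exact: tle_mul.
move=> h; case/orP: (tle_total s m1 m2) => // h2.
by move/addIm: (tle_anti h (tle_mul m h2)) => ->; apply: tle_refl.
Qed.

Definition tlt m1 m2 := tl m1 m2 && (m1 != m2).

Lemma tlt_le_trans m1 m2 m3 : tlt m1 m2 -> tl m2 m3 -> tlt m1 m3.
Proof.
case/andP=> h1 ne h2; rewrite /tlt (tle_trans h1 h2) /=.
by apply: contra_neq ne => e; rewrite e in h1 *; apply: tle_anti h1 h2.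
Qed.

Lemma tlt_trans : transitive tlt.
Proof. by move=> y x z h1 /andP [h2 _]; apply: tlt_le_trans h1 h2. Qed.

Lemma tlt_geF m1 m2 : tlt m1 m2 -> tl m2 m1 = false.
Proof. by case/andP=> h ne; apply: contraNF ne => h2; rewrite (tle_anti h h2). Qed.

Lemma tle_or_tgt m1 m2 : tl m1 m2 || tlt m2 m1.
Proof.
rewrite /tlt; case: (eqVneq m1 m2) => [->|ne]; first by rewrite tle_refl.
by case/orP: (tle_total s m1 m2) => ->; rewrite ?orbT // eq_sym ne.
Qed.

End TermOrder.

Lemma nondecreasing_subseq (g : nat -> nat) : exists psi : nat -> nat,
  (forall k, psi k < psi k.+1) /\ (forall k, g (psi k) <= g (psi k.+1)).
Proof.
have argmin_after j : exists i, j < i /\ forall i', j < i' -> g i <= g i'.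
  have [v [[i [ji <-]] v_min]] :=
    @ex_least_nat (fun v => exists i, j < i /\ g i = v)
      (ex_intro _ _ (ex_intro _ j.+1 (conj (ltnSn j) erefl))).
  by exists i; split => // i' ji'; apply: v_min; exists i'.
pose next j := proj1_sig (constructive_indefinite_description _ (argmin_after j)).
have nextP j : j < next j /\ forall i', j < i' -> g (next j) <= g i'.
  by rewrite /next; case: constructive_indefinite_description.
exists (fun k => iter k.+1 next 0); split => k.
  by rewrite [X in _ < X]iterS; case: (nextP (iter k.+1 next 0)).
rewrite iterS; case: (nextP (iter k next 0)) => lt1; apply.
by rewrite [X in _ < X]iterS; apply: (ltn_trans lt1); case: (nextP (next (iter k next 0))).
Qed.

Section Dickson.
Variable n : nat.

Lemma dickson_coord (f : nat -> 'X_{1..n}) k : exists phi : nat -> nat,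
  (forall l, phi l < phi l.+1) /\
  forall i : 'I_n, i < k -> forall l, f (phi l) i <= f (phi l.+1) i.
Proof.
elim: k => [|k [phi [phi_incr phi_mono]]]; first by exists id.
case: (ltnP k n) => kn; last first.
  exists phi; split => // i; rewrite ltnS leq_eqVlt => /orP [/eqP ik|]; last exact: phi_mono.
  by move: (ltn_ord i); rewrite ik ltnNge kn.
pose i0 := Ordinal kn.
have [psi [psi_incr psi_mono]] := nondecreasing_subseq (fun l => f (phi l) i0).
exists (fun l => phi (psi l)); split => [l|i]; first exact: homo_ltn ltn_trans phi_incr _ _ _.
rewrite ltnS leq_eqVlt => /orP [/eqP ik l|ik l].
  by have -> : i = i0 by apply: val_inj.
apply: (homo_leq (r := fun a b => f a i <= f b i)) => //.
- by move=> y x z; apply: leq_trans.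
- exact: phi_mono.
- exact/ltnW.
Qed.

Lemma dickson (f : nat -> 'X_{1..n}) : exists phi : nat -> nat,
  (forall l, phi l < phi l.+1) /\ forall l, (f (phi l) <= f (phi l.+1))%MM.
Proof.
have [phi [phi_incr phi_mono]] := dickson_coord f n.
by exists phi; split => // l; apply/mnm_lepP => i; apply: phi_mono.
Qed.

Lemma tlt_wf (s : term_order n) : well_founded (tlt s).
Proof.
move=> x0; apply: NNPP => x0_nacc.
pose T := {y | ~ Acc (tlt s) y}.
have ex_smaller (y : T) : exists z : T, tlt s (sval z) (sval y).
  case: y => y y_nacc /=; apply: NNPP => nz; apply: y_nacc; constructor => z zy.
  by apply: NNPP => z_nacc; apply: nz; exists (exist _ z z_nacc).
pose step (y : T) : T := proj1_sig (constructive_indefinite_description _ (ex_smaller y)).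
have stepP y : tlt s (sval (step y)) (sval y).
  by rewrite /step; case: constructive_indefinite_description.
pose f k := sval (iter k step (exist _ x0 x0_nacc)).
have f_decr i j : i < j -> tlt s (f j) (f i).
  apply: (homo_ltn (r := fun a b => tlt s b a)) => [y x z h1 h2|k].
    exact: tlt_trans h2 h1.
  by rewrite /f iterS; apply: stepP.
have [phi [phi_incr phi_mono]] := dickson f.
by have := lepm_tle s (phi_mono 0); rewrite (tlt_geF (f_decr _ _ (phi_incr 0))).
Qed.

End Dickson.

Local Open Scope ring_scope.

Section Ideals.
Variables (n : nat) (R : comNzRingType).
Implicit Types (G : seq {mpoly R[n]}) (f g : {mpoly R[n]}) (J : {mpoly R[n]} -> Prop).

Lemma in_ideal0 G : in_ideal G 0.
Proof. by exists [::]; rewrite big1 // => i _; rewrite nth_nil mul0r. Qed.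

Lemma in_idealD G f g : in_ideal G f -> in_ideal G g -> in_ideal G (f + g).
Proof.
case=> c1 -> [c2 ->]; exists (mkseq (fun i => c1`_i + c2`_i) (size G)).
by rewrite -big_split /=; apply: eq_bigr => i _; rewrite nth_mkseq // mulrDl.
Qed.

Lemma in_idealM G a f : in_ideal G f -> in_ideal G (a * f).
Proof.
case=> c ->; exists (mkseq (fun i => a * c`_i) (size G)).
by rewrite mulr_sumr; apply: eq_bigr => i _; rewrite nth_mkseq // mulrA.
Qed.

Lemma in_ideal_mem G g : g \in G -> in_ideal G g.
Proof.
move=> gG; exists (mkseq (fun i => (i == index g G)%:R) (size G)).
have ig : (index g G < size G)%N by rewrite index_mem.
rewrite (bigD1 (Ordinal ig)) //= nth_mkseq // eqxx mul1r nth_index // big1 ?addr0 //.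
move=> i ne; rewrite nth_mkseq //; case: eqP => [e|_]; last by rewrite mul0r.
by move: ne; rewrite -val_eqE /= e eqxx.
Qed.

Lemma is_ideal_in_ideal G : is_ideal (in_ideal G).
Proof. by split; [apply: in_ideal0 | apply: in_idealD | apply: in_idealM]. Qed.

Lemma in_ideal_sub J G f : is_ideal J ->
  (forall g, g \in G -> J g) -> in_ideal G f -> J f.
Proof.
case=> J0 JD JM GJ [c ->]; apply: (big_ind (fun x => J x)) => // i _.
by apply: JM; apply: GJ; apply: mem_nth.
Qed.

Lemma idealB J f g : is_ideal J -> J f -> J g -> J (f - g).
Proof. by case=> _ JD JM Jf Jg; rewrite -mulN1r; apply: JD => //; apply: JM. Qed.

Lemma idealZ J c f : is_ideal J -> J f -> J (c *: f).
Proof. by case=> _ _ JM Jf; rewrite -mul_mpolyC; apply: JM. Qed.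

Lemma idealMX J f t : is_ideal J -> J f -> J (f * 'X_[t]).
Proof. by case=> _ _ JM Jf; rewrite mulrC; apply: JM. Qed.

End Ideals.

Section LeadingTerm.
Variables (n : nat) (R : comNzRingType) (s : term_order n).
Local Notation tl := (tle s).
Implicit Types (f g : {mpoly R[n]}).

Definition tbounded f mu := forall m, f@_m != 0 -> tl m mu.

Lemma LT0 : LT s (0 : {mpoly R[n]}) = 0%MM.
Proof. by rewrite /LT msupp0. Qed.

Lemma LC0 : LC s (0 : {mpoly R[n]}) = 0.
Proof. by rewrite /LC mcoeff0. Qed.

Lemma LT_tbounded f : tbounded f (LT s f).
Proof. by move=> m; rewrite -mcoeff_msupp; apply: tle_tmax. Qed.

Lemma LC_eq0 f : (LC s f == 0) = (f == 0).
Proof.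
apply/idP/idP => [|/eqP ->]; last by rewrite LC0.
by apply: contraLR => nz; rewrite /LC -mcoeff_msupp; apply: tmax_in; rewrite msupp_eq0.
Qed.

Lemma LC_neq0 f : f != 0 -> LC s f != 0.
Proof. by rewrite LC_eq0. Qed.

Lemma LT_eq f mu : f@_mu != 0 -> tbounded f mu -> LT s f = mu.
Proof.
move=> h b; apply: tle_anti; last exact: LT_tbounded.
by apply/b/LC_neq0; apply: contraNneq h => ->; rewrite mcoeff0.
Qed.

Lemma LT_tlt f mu : tbounded f mu -> f@_mu = 0 -> f != 0 -> tlt s (LT s f) mu.
Proof.
move=> b e nz; rewrite /tlt b ?LC_neq0 //=; apply/eqP=> e2.
by move: (LC_neq0 nz); rewrite /LC e2 e eqxx.
Qed.

Lemma tboundedD f g mu : tbounded f mu -> tbounded g mu -> tbounded (f + g) mu.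
Proof.
move=> bf bg m; rewrite mcoeffD; case: (eqVneq f@_m 0) => [->|h _]; last exact: bf.
by rewrite add0r; apply: bg.
Qed.

Lemma tboundedZ f mu c : tbounded f mu -> tbounded (c *: f) mu.
Proof.
by move=> bf m; rewrite mcoeffZ => h; apply: bf; apply: contraNneq h => ->; rewrite mulr0.
Qed.

Lemma tbounded_trans f mu mu' : tbounded f mu -> tl mu mu' -> tbounded f mu'.
Proof. by move=> b h m /b h2; apply: tle_trans h2 h. Qed.

Lemma tboundedMX f mu t : tbounded f mu -> tbounded (f * 'X_[t]) (t + mu)%MM.
Proof.
move=> b m; rewrite -mcoeff_msupp (perm_mem (msuppMX f t)) => /mapP [k kf ->].
by rewrite ![(t + _)%MM]addmC tle_add2r; apply: b; rewrite -mcoeff_msupp.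
Qed.

Lemma LTMX f t : f != 0 -> LT s (f * 'X_[t]) = (t + LT s f)%MM.
Proof.
move=> nz; apply: LT_eq; last exact/tboundedMX/LT_tbounded.
by rewrite mcoeffMX; apply: LC_neq0.
Qed.

Lemma LCMX f t : LC s (f * 'X_[t]) = LC s f.
Proof.
case: (eqVneq f 0) => [->|nz]; first by rewrite mul0r.
by rewrite /LC LTMX // mcoeffMX.
Qed.

Lemma mulX_neq0 f t : f != 0 -> f * 'X_[t] != 0.
Proof. by move=> nz; rewrite -(LC_eq0) LCMX LC_neq0. Qed.

Lemma LT_lincomb f1 f2 u v : LT s f1 = LT s f2 ->
  u * LC s f1 + v * LC s f2 != 0 ->
  LT s (u *: f1 + v *: f2) = LT s f1 /\ LC s (u *: f1 + v *: f2) = u * LC s f1 + v * LC s f2.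
Proof.
move=> e nz; have coef : (u *: f1 + v *: f2)@_(LT s f1) = u * LC s f1 + v * LC s f2.
  by rewrite mcoeffD !mcoeffZ /LC e.
have lt : LT s (u *: f1 + v *: f2) = LT s f1.
  apply: LT_eq; first by rewrite coef.
  by apply: tboundedD; apply: tboundedZ; [|rewrite e]; apply: LT_tbounded.
by rewrite /LC lt coef.
Qed.

End LeadingTerm.

Section ScaleField.
Variables (n : nat) (R : idomainType) (s : term_order n).

Lemma LTZ (f : {mpoly R[n]}) a : a != 0 -> LT s (a *: f) = LT s f.
Proof.
move=> nza; case: (eqVneq f 0) => [->|nz]; first by rewrite scaler0.
apply: LT_eq; last by apply: tboundedZ; apply: LT_tbounded.
by rewrite mcoeffZ mulf_neq0 // LC_neq0.
Qed.

Lemma LCZ (f : {mpoly R[n]}) a : a != 0 -> LC s (a *: f) = a * LC s f.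
Proof. by move=> nza; rewrite /LC LTZ // mcoeffZ. Qed.

End ScaleField.

Section StrongGroebner.
Variables (n : nat) (s : term_order n) (J : {mpoly int[n]} -> Prop).
Hypothesis iJ : is_ideal J.
Implicit Types (f g h : {mpoly int[n]}) (H : seq {mpoly int[n]}).

Lemma gcd_lincomb f1 f2 : J f1 -> J f2 -> f1 != 0 -> LT s f1 = LT s f2 ->
  exists f, [/\ J f, f != 0, LT s f = LT s f1 & LC s f = gcdz (LC s f1) (LC s f2)].
Proof.
move=> J1 J2 nz e; have [u [v uv]] := Bezoutz (LC s f1) (LC s f2).
have nzg : u * LC s f1 + v * LC s f2 != 0 by rewrite uv gcdz_eq0 negb_and LC_neq0.
have [lt lc] := LT_lincomb e nzg.
exists (u *: f1 + v *: f2); split => //; last by rewrite lc uv.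
- by case: iJ => _ JD _; apply: JD; apply: idealZ.
- by rewrite -(LC_eq0 s) lc.
Qed.

Lemma strong_groebner_in_ideal H :
  (forall h, h \in H -> J h /\ h != 0) ->
  (forall f, J f -> f != 0 -> exists h, h \in H /\ lm_dvd s h f) ->
  forall f, J f -> in_ideal H f.
Proof.
move=> HJ strong f; move: {2}(LT s f) (erefl (LT s f)) => mu.
elim/(well_founded_ind (tlt_wf s)): mu f => mu IH f e Jf.
case: (eqVneq f 0) => [->|nz]; first exact: in_ideal0.
have [h [hH /andP [dv le]]] := strong f Jf nz; have [Jh hnz] := HJ h hH.
pose q := (LC s f %/ LC s h)%Z; pose g := h * 'X_[LT s f - LT s h].
have LTg : LT s g = LT s f by rewrite LTMX // submK.
have cg : g@_(LT s f) = LC s h by rewrite -LTg; apply: LCMX.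
have Hg : in_ideal H (q *: g) by rewrite /g mulrC scalerAl; apply/in_idealM/in_ideal_mem.
rewrite -(subrK (q *: g) f); apply: in_idealD => //.
have Jf' : J (f - q *: g) by apply: idealB => //; apply: idealZ => //; apply: idealMX.
case: (eqVneq (f - q *: g) 0) => [->|nz']; first exact: in_ideal0.
apply: (IH (LT s (f - q *: g))) => //; rewrite -e; apply: LT_tlt => //.
  by rewrite -scaleNr; apply: tboundedD; [|apply: tboundedZ; rewrite -LTg]; apply: LT_tbounded.
by rewrite mcoeffB mcoeffZ cg /q divzK // subrr.
Qed.

Definition lc_at m k := exists f, [/\ J f, f != 0, LT s f = m & `|LC s f|%N = k].

Definition min_lc m : nat := epsilon (inhabits 0%N) (fun k =>
  (k = 0%N /\ ~ exists k', lc_at m k') \/ (lc_at m k /\ forall k', lc_at m k' -> (k <= k')%N)).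

Lemma min_lc_spec m : (min_lc m = 0%N /\ ~ exists k, lc_at m k) \/
  (lc_at m (min_lc m) /\ forall k, lc_at m k -> (min_lc m <= k)%N).
Proof.
apply: (epsilon_spec (inhabits 0%N) (fun k =>
  (k = 0%N /\ ~ exists k', lc_at m k') \/ (lc_at m k /\ forall k', lc_at m k' -> (k <= k')%N))).
case: (classic (exists k, lc_at m k)) => [ex|nex]; last by exists 0%N; left.
by have [k [Ck k_min]] := ex_least_nat ex; exists k; right.
Qed.

Lemma lc_at_gt0 m k : lc_at m k -> (0 < k)%N.
Proof. by case=> f [_ nz _ <-]; rewrite absz_gt0 LC_neq0. Qed.

Lemma min_lcP m k : lc_at m k -> lc_at m (min_lc m) /\ forall k', lc_at m k' -> (min_lc m <= k')%N.
Proof. by move=> Ck; case: (min_lc_spec m) => [[_ []]|//]; exists k. Qed.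

Lemma min_lc_gt0 m k : lc_at m k -> (0 < min_lc m)%N.
Proof. by case/min_lcP => /lc_at_gt0. Qed.

Lemma lc_at_min_lc m : (0 < min_lc m)%N -> lc_at m (min_lc m).
Proof. by case: (min_lc_spec m) => [[-> _]|[]]. Qed.

Lemma min_lc_dvd m k : lc_at m k -> (min_lc m %| k)%N.
Proof.
move=> Ck; have [[f0 [J0 nz0 e0 a0]] k_min] := min_lcP Ck.
case: Ck => f1 [J1 nz1 e1 a1].
have [g [Jg nzg eg lcg]] := gcd_lincomb J0 J1 nz0 (etrans e0 (esym e1)).
have Cg : lc_at m (gcdn (min_lc m) k) by exists g; rewrite eg lcg /gcdz a0 a1.
suff <- : gcdn (min_lc m) k = min_lc m by apply: dvdn_gcdr.
by apply/eqP; rewrite eqn_leq k_min // dvdn_leq ?dvdn_gcdl //; apply: min_lc_gt0 Cg.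
Qed.

Lemma lc_at_mono m m' k : (m' <= m)%MM -> lc_at m' k -> lc_at m k.
Proof.
move=> le [f [Jf nz e a]]; exists (f * 'X_[m - m']); split.
- exact: idealMX.
- exact: mulX_neq0.
- by rewrite LTMX // e submK.
- by rewrite LCMX.
Qed.

Lemma min_lc_mono m m' : (m' <= m)%MM -> (0 < min_lc m')%N ->
  (0 < min_lc m)%N /\ (min_lc m %| min_lc m')%N.
Proof.
move=> le /lc_at_min_lc C; have C' := lc_at_mono le C.
by split; [apply: min_lc_gt0 C' | apply: min_lc_dvd].
Qed.

Definition lc_jump m := (0 < min_lc m)%N /\
  forall m', (m' <= m)%MM -> m' != m -> min_lc m' != min_lc m.

Lemma lc_jump_below m : (0 < min_lc m)%N ->
  exists m0, [/\ (m0 <= m)%MM, min_lc m0 = min_lc m & lc_jump m0].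
Proof.
elim/(well_founded_ind (tlt_wf s)): m => m IH pos.
case: (classic (lc_jump m)) => [j|nj]; first by exists m; split => //; apply: lepm_refl.
have [m' [le' ne' e']] : exists m', [/\ (m' <= m)%MM, m' != m & min_lc m' = min_lc m].
  apply: NNPP => nex; apply: nj; split => // m' le' ne'.
  by apply/eqP => e; apply: nex; exists m'.
have [||m0 [le0 e0 j0]] := IH m'; [by rewrite /tlt lepm_tle | by rewrite e' |].
by exists m0; split => //; [apply: lepm_trans le0 le' | rewrite e0 e'].
Qed.

Lemma lc_jumps_finite : exists l : seq 'X_{1..n}, forall m, lc_jump m -> m \in l.
Proof.
apply: NNPP => nex.
have fresh (l : seq 'X_{1..n}) : exists m, lc_jump m /\ m \notin l.
  apply: NNPP => nm; apply: nex; exists l => m jm; apply: NNPP => nin.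
  by apply: nm; exists m; split => //; apply/negP.
pose pick l := proj1_sig (constructive_indefinite_description _ (fresh l)).
have pickP l : lc_jump (pick l) /\ pick l \notin l.
  by rewrite /pick; case: constructive_indefinite_description.
pose L k := iter k (fun l => pick l :: l) [::].
pose x k := pick (L k).
have x_in_L i j : (i < j)%N -> x i \in L j.
  move=> /subnKC <-; elim: (j - i.+1)%N => [|d IHd].
    by rewrite addn0 /L iterS inE eqxx.
  by rewrite addnS /L iterS inE -/(L _) IHd orbT.
have x_neq i j : (i < j)%N -> x i != x j.
  by move=> lt; apply: contraTneq (x_in_L _ _ lt) => ->; case: (pickP (L j)).
have [phi [phi_incr phi_mono]] := dickson x.
pose a l := min_lc (x (phi l)).
have a_decr l : (a l.+1 < a l)%N.
  have [[_ jump1] _] := pickP (L (phi l.+1)).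
  have [[pos0 _] _] := pickP (L (phi l)).
  have [_ dv] := min_lc_mono (phi_mono l) pos0.
  rewrite /a ltn_neqAle eq_sym jump1 ?phi_mono ?x_neq //=; exact: dvdn_leq.
have a_bound l : (a l + l <= a 0)%N.
  elim: l => [|l IHl]; first by rewrite addn0.
  by rewrite addnS; apply: leq_trans IHl; rewrite ltn_add2r.
by have := a_bound (a 0%N).+1; rewrite addnS ltnNge leq_addl.
Qed.

Lemma lc_jumps_seq : exists l : seq 'X_{1..n}, uniq l /\ forall m, m \in l <-> lc_jump m.
Proof.
have [l0 l0P] := lc_jumps_finite; exists [seq m <- undup l0 | classic_bool (lc_jump m)].
split => [|m]; first by rewrite filter_uniq ?undup_uniq.
rewrite mem_filter mem_undup; split => [/andP [/classic_boolP]//|jm].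
by rewrite l0P // andbT; apply/classic_boolP.
Qed.

Definition lc_witness m : {mpoly int[n]} := epsilon (inhabits 0)
  (fun f => [/\ J f, f != 0, LT s f = m & `|LC s f|%N = min_lc m]).

Lemma lc_witnessP m : (0 < min_lc m)%N ->
  [/\ J (lc_witness m), lc_witness m != 0, LT s (lc_witness m) = m &
      `|LC s (lc_witness m)|%N = min_lc m].
Proof. by move/lc_at_min_lc; apply: epsilon_spec. Qed.

Lemma lc_witness_lm_dvd f : J f -> f != 0 ->
  exists2 m0, lc_jump m0 & lm_dvd s (lc_witness m0) f.
Proof.
move=> Jf nz; have C : lc_at (LT s f) `|LC s f|%N by exists f.
have [m0 [le0 e0 j0]] := lc_jump_below (min_lc_gt0 C).
have [_ _ lt0 lc0] := lc_witnessP (proj1 j0).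
by exists m0; rewrite // /lm_dvd dvdzE lc0 e0 min_lc_dvd // lt0 le0.
Qed.

Theorem exists_minimal_strong_groebner : exists H, minimal_strong_groebner s J H.
Proof.
have [l [l_uniq lP]] := lc_jumps_seq; exists (map lc_witness l).
have HJ h : h \in map lc_witness l -> J h /\ h != 0.
  by case/mapP => m /lP [pos _] ->; case: (lc_witnessP pos).
have strong f : J f -> f != 0 -> exists h, h \in map lc_witness l /\ lm_dvd s h f.
  move=> Jf nz; have [m0 /lP m0l dv] := lc_witness_lm_dvd Jf nz.
  by exists (lc_witness m0); rewrite map_f.
split; first split.
- by move=> h /HJ[].
- move=> f; split; first exact: strong_groebner_in_ideal.
  by apply: in_ideal_sub => // h /HJ[].
- exact: strong.
move=> i j; rewrite size_map => il jl ij; rewrite !(nth_map 0%MM) //.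
have /lP ji := mem_nth 0%MM jl; have /lP ii := mem_nth 0%MM il; rewrite /lm_dvd.
have [_ _ lti lci] := lc_witnessP (proj1 ii); have [_ _ ltj lcj] := lc_witnessP (proj1 ji).
apply/negP => /andP []; rewrite dvdzE lti ltj lci lcj => dv le.
have [_ dv'] := min_lc_mono le (proj1 ii).
have := proj2 ji _ le; rewrite nth_uniq // => /(_ ij).
by rewrite eqn_dvd dv dv'.
Qed.

End StrongGroebner.

Section MinimalStrongGroebner.
Variables (n : nat) (s : term_order n) (J : {mpoly int[n]} -> Prop).
Variable H : seq {mpoly int[n]}.
Hypotheses (iJ : is_ideal J) (HJ : minimal_strong_groebner s J H).

Lemma msgb_ideal h : h \in H -> J h.
Proof. by case: HJ => [[_ JH _] _] hH; apply/JH/in_ideal_mem. Qed.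

Lemma msgb_neq0 h : h \in H -> h != 0.
Proof. by case: HJ => [[nzH _ _] _]; apply: nzH. Qed.

Lemma msgb_lm_dvd f : J f -> f != 0 -> exists h, h \in H /\ lm_dvd s h f.
Proof. by case: HJ => [[_ _ strong] _]; apply: strong. Qed.

Lemma msgb_lm_dvd_eq h h' : h \in H -> h' \in H -> lm_dvd s h' h -> h' = h.
Proof.
case: HJ => _ minH hH h'H; apply: contraTeq => ne.
have := minH (index h' H) (index h H); rewrite !index_mem !nth_index //; apply => //.
by apply: contra_neq ne => e; rewrite -(nth_index 0 h'H) e nth_index.
Qed.

Lemma msgb_LC_dvd h f : h \in H -> J f -> LT s f = LT s h -> (LC s h %| LC s f)%Z.
Proof.
move=> hH Jf e.
have [g [Jg nzg LTg LCg]] := gcd_lincomb iJ (msgb_ideal hH) Jf (msgb_neq0 hH) (esym e).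
have [h' [h'H /andP [dv le]]] := msgb_lm_dvd Jg nzg.
have <- : h' = h.
  by apply: msgb_lm_dvd_eq; rewrite // /lm_dvd (dvdz_trans dv) ?LCg ?dvdz_gcdl // -LTg.
by rewrite (dvdz_trans dv) // LCg dvdz_gcdr.
Qed.

End MinimalStrongGroebner.

Section CoprimeReduction.
Variables (n : nat) (s : term_order n) (J : {mpoly int[n]} -> Prop).
Hypothesis iJ : is_ideal J.
Variables (B : pred 'X_{1..n}) (p : nat).
Hypothesis B_coprime : forall m, B m ->
  exists h, [/\ J h, h != 0, (LT s h <= m)%MM & coprime `|LC s h| p].
Implicit Types F : {mpoly int[n]}.

Lemma reduction_step F b : J F -> F != 0 -> coprime `|LC s F| p ->
  B b -> tlt s b (LT s F) ->
  exists F', [/\ J F', LT s F' = LT s F, coprime `|LC s F'| p, F'@_b = 0 &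
    forall x, tlt s b x -> (F'@_x == 0) = (F@_x == 0)].
Proof.
move=> JF nzF cop Bb bF; have [h [Jh nzh le cph]] := B_coprime Bb.
pose g := h * 'X_[b - LT s h].
have LTg : LT s g = b by rewrite LTMX // submK.
have cg : g@_b = LC s h by rewrite -LTg; apply: LCMX.
pose F' := LC s h *: F - F@_b *: g.
have coef_hi x : tlt s b x -> F'@_x = LC s h * F@_x.
  move=> bx; rewrite mcoeffB !mcoeffZ.
  case: (eqVneq g@_x 0) => [->|gx]; first by rewrite mulr0 subr0.
  by have := LT_tbounded s gx; rewrite LTg tlt_geF.
have F'_LT : F'@_(LT s F) = LC s h * LC s F by apply: coef_hi.
have LTF' : LT s F' = LT s F.
  apply: LT_eq; first by rewrite F'_LT mulf_neq0 ?LC_neq0.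
  rewrite /F' -scaleNr; apply: tboundedD; apply: tboundedZ; first exact: LT_tbounded.
  by apply: tbounded_trans (LT_tbounded s (f := g)) _; rewrite LTg; case/andP: bF.
exists F'; split => //.
- by apply: idealB => //; apply: idealZ => //; apply: idealMX.
- by rewrite /LC LTF' F'_LT abszM coprimeMl cph.
- by rewrite mcoeffB !mcoeffZ cg mulrC subrr.
- by move=> x bx; rewrite coef_hi // mulf_eq0 (negbTE (LC_neq0 s nzh)).
Qed.

Definition offending F := [seq x <- msupp F | (x != LT s F) && B x].

Lemma coprime_reduction F : J F -> F != 0 -> coprime `|LC s F| p ->
  exists F', [/\ J F', F' != 0, LT s F' = LT s F, coprime `|LC s F'| p &
    forall x, F'@_x != 0 -> x != LT s F -> ~~ B x].
Proof.
move=> JF nzF cop; suff /(_ (LT s F) F JF nzF cop) : forall mu F, J F -> F != 0 ->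
    coprime `|LC s F| p -> (forall x, x \in offending F -> tlt s x mu) ->
    exists F', [/\ J F', F' != 0, LT s F' = LT s F, coprime `|LC s F'| p &
      forall x, F'@_x != 0 -> x != LT s F -> ~~ B x].
  apply=> x; rewrite mem_filter mcoeff_msupp => /andP [/andP [ne _] Fx].
  by rewrite /tlt ne andbT; apply: LT_tbounded.
elim/(well_founded_ind (tlt_wf s)) => {JF nzF cop}mu IH {}F JF nzF cop off_mu.
case: (eqVneq (offending F) [::]) => [off0|off].
  exists F; split => // x Fx nx; apply/negP => Bx.
  suff : x \in offending F by rewrite off0.
  by rewrite mem_filter nx Bx mcoeff_msupp.
have b_off := tmax_in s off; set b := tmax s (offending F) in b_off.
move: (b_off); rewrite mem_filter mcoeff_msupp => /andP [/andP [ne Bb] Fb].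
have bF : tlt s b (LT s F) by rewrite /tlt ne andbT; apply: LT_tbounded.
have [F' [JF' LTF' cop' F'b F'hi]] := reduction_step JF nzF cop Bb bF.
have nzF' : F' != 0.
  by apply: contraNneq (LC_neq0 s nzF) => F'0; rewrite /LC -(F'hi _ bF) F'0 mcoeff0.
have [|F'' [JF'' nzF'' LTF'' cop'' F''_off]] := IH b (off_mu b b_off) F' JF' nzF' cop'.
  move=> x; rewrite mem_filter mcoeff_msupp LTF' => /andP [/andP [xne Bx] F'x].
  case/orP: (tle_or_tgt s x b) => [xb|bx].
    by rewrite /tlt xb /=; apply: contra_neq F'x => ->.
  have : x \in offending F by rewrite mem_filter xne Bx mcoeff_msupp -(F'hi _ bx).
  by move/(tle_tmax s); rewrite tlt_geF.
by exists F''; rewrite LTF'' LTF' in F''_off *.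
Qed.

End CoprimeReduction.

Section BigLcm.
Variables (T : eqType) (F : T -> nat).

Lemma dvdn_biglcm (r : seq T) x : x \in r -> (F x %| \big[lcmn/1%N]_(y <- r) F y)%N.
Proof.
elim: r => [//|a r IH]; rewrite inE big_cons => /orP [/eqP ->|xr].
  exact: dvdn_lcml.
exact: dvdn_trans (IH xr) (dvdn_lcmr _ _).
Qed.

Lemma biglcm_dvd (r : seq T) d : (forall x, x \in r -> F x %| d)%N ->
  (\big[lcmn/1%N]_(y <- r) F y %| d)%N.
Proof.
move=> dv; rewrite big_seq; elim/big_ind: _ => [|a b da db|x /dv] //.
by rewrite dvdn_lcm da db.
Qed.

Lemma biglcm_gt0 (r : seq T) : (forall x, x \in r -> 0 < F x)%N ->
  (0 < \big[lcmn/1%N]_(y <- r) F y)%N.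
Proof.
move=> pos; rewrite big_seq; elim/big_ind: _ => [|a b a0 b0|x /pos] //.
by rewrite lcmn_gt0 a0 b0.
Qed.

Lemma prime_dvd_biglcm (r : seq T) p : prime p ->
  (p %| \big[lcmn/1%N]_(y <- r) F y)%N -> exists2 x, x \in r & (p %| F x)%N.
Proof.
move=> p_pr; elim: r => [|a r IH]; first by rewrite big_nil dvdn1 => /eqP p1; rewrite p1 in p_pr.
rewrite big_cons => pl.
have : (p %| F a * \big[lcmn/1%N]_(y <- r) F y)%N.
  by apply: dvdn_trans pl _; rewrite dvdn_lcm dvdn_mulr // dvdn_mull.
rewrite Euclid_dvdM // => /orP [pa|/IH [x xr px]]; first by exists a; rewrite ?mem_head.
by exists x; rewrite // inE xr orbT.
Qed.

Lemma biggcd_dvdn (r : seq T) x : x \in r -> (\big[gcdn/0%N]_(y <- r) F y %| F x)%N.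
Proof.
elim: r => [//|a r IH]; rewrite inE big_cons => /orP [/eqP ->|xr].
  exact: dvdn_gcdl.
exact: dvdn_trans (dvdn_gcdr _ _) (IH xr).
Qed.

End BigLcm.

Lemma radn_eq a b : (0 < a)%N -> (0 < b)%N ->
  (forall p, prime p -> (p %| a)%N = (p %| b)%N) -> radn a = radn b.
Proof.
move=> a_gt0 b_gt0 ab; rewrite /radn; have -> // : primes a = primes b.
apply/eq_primes => p.
by rewrite !mem_primes a_gt0 b_gt0; case: (boolP (prime p)) => //= /ab.
Qed.

Lemma denq_div_dvd (z k : int) : k != 0 ->
  (`|denq (z%:~R / k%:~R : rat)| %| `|k|)%N.
Proof.
move=> nzk; set x := (z%:~R / k%:~R : rat).
have e : numq x * k = z * denq x.
  apply: (@intr_inj rat); rewrite !intrM numqE /x -mulrA [_ * k%:~R]mulrC mulrA.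
  by rewrite mulfVK // intr_eq0.
have : (`|denq x| %| `|numq x| * `|k|)%N by rewrite -abszM e abszM dvdn_mull.
by rewrite Gauss_dvdr // coprime_sym coprime_num_den.
Qed.

Lemma mul_den_multiple_int (r : rat) (d : nat) : (`|denq r| %| d)%N ->
  r * d%:~R = (numq (r * d%:~R))%:~R.
Proof.
case/dvdnP => q e; have dz : d%:Z = q%:Z * denq r by rewrite e PoszM absz_denq.
have -> : r * d%:~R = (numq r * q%:Z)%:~R.
  by rewrite dz !intrM numqE -mulrA [(q%:Z)%:~R * _]mulrC.
by rewrite numq_int.
Qed.

Section Primitive.
Variables (n : nat) (s : term_order n).
Implicit Types (F : {mpoly int[n]}) (g : {mpoly rat[n]}).

Definition intr_mpoly F : {mpoly rat[n]} := map_mpoly intr F.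

Lemma mcoeff_intr_mpoly F m : (intr_mpoly F)@_m = (F@_m)%:~R.
Proof. exact: mcoeff_map_mpoly. Qed.

Lemma LT_intr_mpoly F : LT s (intr_mpoly F) = LT s F.
Proof.
case: (eqVneq F 0) => [->|nz]; first by rewrite /intr_mpoly raddf0 !LT0.
apply: LT_eq; first by rewrite mcoeff_intr_mpoly intr_eq0 LC_neq0.
by move=> m; rewrite mcoeff_intr_mpoly intr_eq0; apply: LT_tbounded.
Qed.

Lemma LC_intr_mpoly F : LC s (intr_mpoly F) = (LC s F)%:~R.
Proof. by rewrite /LC LT_intr_mpoly mcoeff_intr_mpoly. Qed.

Lemma ideal_intr_mpoly (I : {mpoly rat[n]} -> Prop) (G : seq {mpoly rat[n]}) F :
  is_ideal I -> (forall g, g \in G -> I (intr_mpoly (prim g))) ->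
  in_ideal (map (@prim n) G) F -> I (intr_mpoly F).
Proof.
move=> [I0 ID IM] IG [c ->]; rewrite /intr_mpoly raddf_sum /=.
apply: (big_ind (fun x => I x)) => // i _; rewrite rmorphM /=; apply: IM.
have iG : (i < size G)%N by rewrite -(size_map (@prim n)).
by rewrite (nth_map 0) //; apply/IG/mem_nth.
Qed.

Lemma den_gt0 g : (0 < den g)%N.
Proof. by apply: biglcm_gt0 => m _; rewrite absz_gt0 denq_neq0. Qed.

Lemma denq_dvd_den g m : (`|denq g@_m| %| den g)%N.
Proof.
case: (boolP (m \in msupp g)) => mg; first exact: (dvdn_biglcm (fun m => `|denq g@_m|%N)).
by rewrite (memN_msupp_eq0 mg) dvd1n.
Qed.

Lemma icontent_dvd g m : (icontent g %| `|numq (g@_m * (den g)%:~R)|)%N.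
Proof.
case: (boolP (m \in msupp g)) => mg.
  exact: (biggcd_dvdn (fun m => `|numq (g@_m * (den g)%:~R)|%N)).
by rewrite (memN_msupp_eq0 mg) mul0r dvdn0.
Qed.

Lemma icontent_gt0 g : g != 0 -> (0 < icontent g)%N.
Proof.
move=> nz; apply: (dvdn_gt0 _ (icontent_dvd g (LT s g))).
by rewrite absz_gt0 numq_eq0 mulf_neq0 ?LC_neq0 // intr_eq0 -lt0n den_gt0.
Qed.

Lemma mcoeff_prim g m : (prim g)@_m = numq (g@_m * (den g)%:~R / (icontent g)%:~R).
Proof.
rewrite /prim raddf_sum /=; under eq_bigr => m' _ do rewrite mcoeffZ mcoeffX.
case: (boolP (m \in msupp g)) => mg.
  rewrite (bigD1_seq m) ?msupp_uniq //= eqxx mulr1 big1 ?addr0 // => m' ne.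
  by rewrite (negbTE ne) mulr0.
rewrite big1_seq ?(memN_msupp_eq0 mg) ?mul0r // => m' /andP [_ m'g].
by rewrite (_ : m' == m = false) ?mulr0 //; apply: contraNF mg => /eqP <-.
Qed.

Lemma intr_mcoeff_prim g m : g != 0 ->
  ((prim g)@_m)%:~R = g@_m * (den g)%:~R / (icontent g)%:~R.
Proof.
move=> nz; set y := g@_m * (den g)%:~R.
have ey : y = (numq y)%:~R by apply/mul_den_multiple_int/denq_dvd_den.
have /dvdzP [q eq] : ((icontent g)%:Z %| numq y)%Z by rewrite dvdzE; apply: icontent_dvd.
have c_neq0 : (icontent g)%:~R != 0 :> rat by rewrite intr_eq0 -lt0n icontent_gt0.
have -> : y / (icontent g)%:~R = q%:~R by rewrite ey eq intrM mulfK.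
by rewrite mcoeff_prim -/y ey eq intrM mulfK // numq_int.
Qed.

Lemma prim_scale_neq0 g : g != 0 -> ((den g)%:~R / (icontent g)%:~R : rat) != 0.
Proof.
by move=> nz; rewrite mulf_neq0 // ?invr_eq0 intr_eq0 -lt0n ?den_gt0 ?icontent_gt0.
Qed.

Lemma intr_mpoly_prim g : g != 0 ->
  intr_mpoly (prim g) = ((den g)%:~R / (icontent g)%:~R) *: g.
Proof.
move=> nz; apply/mpolyP => m.
by rewrite mcoeff_intr_mpoly intr_mcoeff_prim // mcoeffZ [RHS]mulrC mulrA.
Qed.

Lemma prim_neq0 g : g != 0 -> prim g != 0.
Proof.
move=> nz; apply: contra_neq (prim_scale_neq0 nz) => g0.
have := intr_mpoly_prim nz; rewrite g0 /intr_mpoly raddf0 => /esym/eqP.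
by rewrite scaler_eq0 (negbTE nz) orbF => /eqP.
Qed.

Lemma LT_prim g : g != 0 -> LT s (prim g) = LT s g.
Proof. by move=> nz; rewrite -LT_intr_mpoly intr_mpoly_prim // LTZ // prim_scale_neq0. Qed.

Lemma LC_prim_dvd_den g : g != 0 -> LC s g = 1 -> (`|LC s (prim g)| %| den g)%N.
Proof.
move=> nz lc1; suff e : LC s (prim g) * (icontent g)%:Z = (den g)%:Z.
  by rewrite -[den g]/`|(den g)%:Z|%N -e abszM dvdn_mulr.
apply: (@intr_inj rat); rewrite intrM -LC_intr_mpoly intr_mpoly_prim //.
by rewrite LCZ ?prim_scale_neq0 // lc1 mulr1 mulfVK // intr_eq0 -lt0n icontent_gt0.
Qed.

End Primitive.

Definition lcm_LC n (s : term_order n) (H : seq {mpoly int[n]}) : nat :=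
  \big[lcmn/1%N]_(h <- H) `|LC s h|%N.

Section ReducedBasis.
Variables (n : nat) (sigma : term_order n).
Variables (I : {mpoly rat[n]} -> Prop) (G : seq {mpoly rat[n]}).
Hypotheses (iI : is_ideal I) (GB : reduced_groebner sigma I G).
Local Notation J := (in_ideal (map (@prim n) G)).

Lemma G_neq0 g : g \in G -> g != 0.
Proof. by case: GB => [[_ nzG] _ _ _ _]; apply: nzG. Qed.

Lemma G_ideal g : g \in G -> I g.
Proof. by case: GB => _ IG _ _ _ gG; apply/IG/in_ideal_mem. Qed.

Lemma G_monic g : g \in G -> LC sigma g = 1.
Proof. by case: GB => _ _ _ monic _; apply: monic. Qed.

Lemma LT_ideal_dvd f : I f -> f != 0 -> exists2 g, g \in G & (LT sigma g <= LT sigma f)%MM.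
Proof. by case: GB => _ _ LTI _ _ If nz; have [g []] := LTI f If nz; exists g. Qed.

Lemma intr_mpoly_ideal F : J F -> I (intr_mpoly F).
Proof.
apply: ideal_intr_mpoly => // g gG.
by rewrite intr_mpoly_prim ?G_neq0 //; apply: idealZ iI (G_ideal gG).
Qed.

Lemma prim_shift g m : g \in G -> (LT sigma g <= m)%MM ->
  exists P, [/\ J P, P != 0, LT sigma P = m & LC sigma P = LC sigma (prim g)].
Proof.
move=> gG le; have nz := prim_neq0 sigma (G_neq0 gG).
exists (prim g * 'X_[m - LT sigma g]); split; last exact: LCMX.
- by apply: idealMX (is_ideal_in_ideal _) _; apply/in_ideal_mem/map_f.
- exact: mulX_neq0.
- by rewrite LTMX // LT_prim ?G_neq0 // submK.
Qed.

Definition LT_multiple m := has (fun g => (LT sigma g <= m)%MM) G.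

Lemma reduced_groebner_unique g0 f : g0 \in G -> I f -> f@_(LT sigma g0) = 1 ->
  (forall m, f@_m != 0 -> m != LT sigma g0 -> ~~ LT_multiple m) -> f = g0.
Proof.
move=> g0G If f1 f_std; apply/eqP; apply: contraT => ne.
have dnz : f - g0 != 0 by rewrite subr_eq0.
have [g gG le] := LT_ideal_dvd (idealB iI If (G_ideal g0G)) dnz.
set mu := LT sigma (f - g0) in le.
have dmu : (f - g0)@_mu != 0 by apply: LC_neq0.
have g0m0 : g0@_(LT sigma g0) = 1 by apply: G_monic.
have mune : mu != LT sigma g0 by apply: contra_neq dmu => ->; rewrite mcoeffB f1 g0m0 subrr.
case: (eqVneq f@_mu 0) => [fz|fnz]; last first.
  by move: (f_std mu fnz mune); rewrite /LT_multiple; case/hasP; exists g.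
have g0mu : g0@_mu != 0 by move: dmu; rewrite mcoeffB fz sub0r oppr_eq0.
case: (eqVneq g g0) => [eg|neg].
  rewrite eg in le; move: mune.
  by rewrite (tle_anti (LT_tbounded sigma g0mu) (lepm_tle sigma le)) eqxx.
case: GB => _ _ _ _ /(_ g g0 gG g0G neg mu); rewrite mcoeff_msupp g0mu le.
by move/(_ isT).
Qed.

Variable H : seq {mpoly int[n]}.
Hypothesis HJ : minimal_strong_groebner sigma J H.

Lemma prime_dvd_den_of_lcm p : prime p -> (p %| lcm_LC sigma H)%N -> (p %| denF G)%N.
Proof.
move=> p_pr /(prime_dvd_biglcm p_pr) [h hH ph].
have nzh : intr_mpoly h != 0.
  by rewrite -(LC_eq0 sigma) LC_intr_mpoly intr_eq0 LC_neq0 // (msgb_neq0 HJ).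
have [g gG] := LT_ideal_dvd (intr_mpoly_ideal (msgb_ideal HJ hH)) nzh.
rewrite LT_intr_mpoly => /(prim_shift gG) [P [JP _ LTP LCP]].
have := msgb_LC_dvd (is_ideal_in_ideal _) HJ hH JP LTP; rewrite LCP dvdzE => dvP.
apply: dvdn_trans ph (dvdn_trans dvP (dvdn_trans _ (dvdn_biglcm (@den n) gG))).
exact: LC_prim_dvd_den (G_neq0 gG) (G_monic gG).
Qed.

Lemma coprime_LT_multiple p : prime p -> ~~ (p %| lcm_LC sigma H)%N ->
  forall m, LT_multiple m ->
  exists h, [/\ J h, h != 0, (LT sigma h <= m)%MM & coprime `|LC sigma h| p].
Proof.
move=> p_pr pL m /hasP [g gG le].
have [P [JP nzP LTP _]] := prim_shift gG le.
have [h [hH /andP [_ leh]]] := msgb_lm_dvd HJ JP nzP.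
exists h; split; [exact: (msgb_ideal HJ hH) | exact: (msgb_neq0 HJ hH) | by rewrite -LTP |].
rewrite coprime_sym prime_coprime //; apply: contra pL => ph.
exact: dvdn_trans ph (dvdn_biglcm (fun h => `|LC sigma h|%N) hH).
Qed.

Lemma prime_dvd_lcm_of_den p : prime p -> (p %| denF G)%N -> (p %| lcm_LC sigma H)%N.
Proof.
move=> p_pr pD; apply/negPn/negP => pL.
have [g0 g0G pg0] := prime_dvd_biglcm p_pr pD.
have B_coprime := coprime_LT_multiple p_pr pL.
have [|h0 [Jh0 nzh0 le0 cop0]] := B_coprime (LT sigma g0).
  by apply/hasP; exists g0 => //; apply: lepm_refl.
have [|||F [JF nzF LTF copF F_std]] :=
  coprime_reduction (is_ideal_in_ideal _) B_coprime (F := h0 * 'X_[LT sigma g0 - LT sigma h0]).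
- exact: idealMX (is_ideal_in_ideal _) Jh0.
- exact: mulX_neq0.
- by rewrite LCMX.
rewrite LTMX // (submK le0) in LTF F_std.
have k_neq0 : (LC sigma F)%:~R != 0 :> rat by rewrite intr_eq0 LC_neq0.
have fg0 : (LC sigma F)%:~R^-1 *: intr_mpoly F = g0.
  apply: reduced_groebner_unique => // [||m].
  - exact: idealZ iI (intr_mpoly_ideal JF).
  - by rewrite mcoeffZ mcoeff_intr_mpoly -LTF mulVf.
  - by rewrite mcoeffZ mcoeff_intr_mpoly mulf_eq0 negb_or intr_eq0 => /andP [_]; apply: F_std.
have : (den g0 %| `|LC sigma F|)%N.
  apply: biglcm_dvd => m _; rewrite -fg0 mcoeffZ mcoeff_intr_mpoly mulrC.
  by apply: denq_div_dvd; rewrite LC_neq0.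
by move/(dvdn_trans pg0); apply/negP; rewrite -prime_coprime // coprime_sym.
Qed.

End ReducedBasis.

Unset Implicit Arguments.

Theorem theorem3p11 (n : nat) (sigma : term_order n)
    (I : {mpoly rat[n]} -> Prop) (G : seq {mpoly rat[n]}) :
  is_ideal I ->
  (exists f, I f /\ f != 0) ->
  reduced_groebner sigma I G ->
  radn (denF G) = radn (lcm_sigma sigma (in_ideal (map (@prim n) G))).
Proof.
move=> iI _ GB; rewrite /lcm_sigma.
set H := epsilon _ _.
have HJ : minimal_strong_groebner sigma (in_ideal (map (@prim n) G)) H.
  by apply: epsilon_spec; apply: exists_minimal_strong_groebner; apply: is_ideal_in_ideal.
apply: radn_eq => [||p p_pr].
- by apply: biglcm_gt0 => g _; apply: den_gt0.
- by apply: biglcm_gt0 => h hH; rewrite absz_gt0 LC_neq0 // (msgb_neq0 HJ).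
- apply/idP/idP; [exact: (prime_dvd_lcm_of_den iI GB HJ p_pr) |].
  exact: (prime_dvd_den_of_lcm iI GB HJ p_pr).
Qed.
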